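(* Let $\Omega\subseteq\mathbb{R}^n$ be open. (i) The set $\mathbb{G}(\Omega)$ of all D-continuous interval functions on $\Omega$ is order complete with respect to $\le$ (every subset has a supremum and an infimum in $\mathbb{G}(\Omega)$). (ii) Each of the following sets is Dedekind order complete with respect to $\le$: the set $\mathbb{G}_{bd}(\Omega)$ of all bounded D-continuous interval functions; the set $\mathbb{G}_{ft}(\Omega)$ of all finite D-continuous interval functions; the set $\mathbb{G}_{nf}(\Omega)$ of all nearly finite D-continuous interval functions.
   Context: $\overline{\mathbb{R}}=\mathbb{R}\cup\{\pm\infty\}$, $\mathbb{I}\overline{\mathbb{R}}$ is the set of closed intervals $[\underline a,\overline a]$ with $\underline a\le\overline a$ in $\overline{\mathbb{R}}$, $a\in\overline{\mathbb{R}}$ identified with $[a,a]$. $\mathbb{A}(X)$ is the set of functions $X\to\mathbb{I}\overline{\mathbb{R}}$. Order: $[\underline a,\overline a]\le[\underline b,\overline b]$ iff $\underline a\le\underline b$ and $\overline a\le\overline b$; $f\le g$ iff $f(x)\le g(x)$ for all $x$. $B_\delta(x)=\{y\in\Omega:\|x-y\|<\delta\}$. For dense $D\subseteq\Omega$ and $f\in\mathbb{A}(D)$: $I(D,\Omega,f)(x)=\sup_{\delta>0}\inf\{z\in f(y):y\in B_\delta(x)\cap D\}$, $S(D,\Omega,f)(x)=\inf_{\delta>0}\sup\{z\in f(y):y\in B_\delta(x)\cap D\}$, $F(D,\Omega,f)(x)=[I(D,\Omega,f)(x),S(D,\Omega,f)(x)]$. $f\in\mathbb{A}(\Omega)$ is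 D-continuous if $F(D,\Omega,f)=f$ for every dense $D\subseteq\Omega$. $f$ is bounded if there is $M\in\mathbb{R}$ with $f(x)\subseteq[-M,M]$ for all $x$; finite if $f(x)$ is a finite interval (both endpoints in $\mathbb{R}$) for all $x\in\Omega$; nearly finite if there is an open dense $D\subseteq\Omega$ with $f(x)$ finite for all $x\in D$. A poset is Dedekind order complete if every nonempty subset bounded above has a supremum in it and every nonempty subset bounded below has an infimum in it. *)

From HB Require Import structures.
From mathcomp Require Import all_boot all_order all_algebra.
From mathcomp Require Import all_classical all_reals.
From mathcomp Require Import ereal.
Set Implicit Arguments. Unset Strict Implicit. Unset Printing Implicit Defensive.
Import Order.TTheory GRing.Theory Num.Theory.
Local Open Scope classical_set_scope.
Local Open Scope ring_scope.

Section Defs.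
Variables (R : realType) (n : nat).

Definition pt := 'I_n -> R.
Definition edist (x y : pt) : R := Num.sqrt (\sum_(i < n) (x i - y i) ^+ 2).

Record ival := Ival { lo : \bar R ; hi : \bar R ; lohi : (lo <= hi)%E }.

Definition ival_le (a b : ival) : Prop := (lo a <= lo b)%E /\ (hi a <= hi b)%E.

Definition is_open_set (Om : set pt) : Prop :=
  forall x, Om x -> exists d : R, 0 < d /\ forall y, edist x y < d -> Om y.

Definition dom (Om : set pt) := {x : pt | Om x}.

Definition ifun (Om : set pt) := dom Om -> ival.

Definition ifun_le (Om : set pt) (f g : ifun Om) : Prop :=
  forall x, ival_le (f x) (g x).

Definition dense_in (Om : set pt) (D : set (dom Om)) : Prop :=
  forall (x : dom Om) (d : R), 0 < d ->
    exists y : dom Om, D y /\ edist (sval x) (sval y) < d.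

Definition vals (Om : set pt) (D : set (dom Om)) (f : ifun Om)
    (x : dom Om) (d : R) : set (\bar R) :=
  [set z | exists y : dom Om, [/\ D y, edist (sval x) (sval y) < d &
                                  (lo (f y) <= z <= hi (f y))%E]].

Definition Ilow (Om : set pt) (D : set (dom Om)) (f : ifun Om) (x : dom Om)
  : \bar R :=
  ereal_sup [set ereal_inf (vals D f x d) | d in [set d : R | 0 < d]].

Definition Supp (Om : set pt) (D : set (dom Om)) (f : ifun Om) (x : dom Om)
  : \bar R :=
  ereal_inf [set ereal_sup (vals D f x d) | d in [set d : R | 0 < d]].

Definition D_continuous (Om : set pt) (f : ifun Om) : Prop :=
  forall D : set (dom Om), dense_in D ->
    forall x, Ilow D f x = lo (f x) /\ Supp D f x = hi (f x).

Definition bounded_ifun (Om : set pt) (f : ifun Om) : Prop :=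
  exists M : R, forall x, ((- M)%:E <= lo (f x))%E /\ (hi (f x) <= M%:E)%E.

Definition finite_ival (a : ival) : Prop :=
  lo a \is a fin_num /\ hi a \is a fin_num.

Definition finite_ifun (Om : set pt) (f : ifun Om) : Prop :=
  forall x, finite_ival (f x).

(* D open (as a subset of R^n; D is contained in the open set Omega) *)
Definition open_in (Om : set pt) (D : set (dom Om)) : Prop :=
  forall x, D x -> exists d : R, 0 < d /\
    forall y : dom Om, edist (sval x) (sval y) < d -> D y.

Definition nearly_finite_ifun (Om : set pt) (f : ifun Om) : Prop :=
  exists D : set (dom Om), [/\ open_in D, dense_in D &
                                forall x, D x -> finite_ival (f x)].

Definition G (Om : set pt) : set (ifun Om) := [set f | D_continuous f].
Definition G_bd (Om : set pt) : set (ifun Om) :=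
  [set f | D_continuous f /\ bounded_ifun f].
Definition G_ft (Om : set pt) : set (ifun Om) :=
  [set f | D_continuous f /\ finite_ifun f].
Definition G_nf (Om : set pt) : set (ifun Om) :=
  [set f | D_continuous f /\ nearly_finite_ifun f].

Definition is_sup_in (Om : set pt) (P S : set (ifun Om)) (s : ifun Om) : Prop :=
  [/\ P s, (forall f, S f -> ifun_le f s) &
      (forall u, P u -> (forall f, S f -> ifun_le f u) -> ifun_le s u)].

Definition is_inf_in (Om : set pt) (P S : set (ifun Om)) (s : ifun Om) : Prop :=
  [/\ P s, (forall f, S f -> ifun_le s f) &
      (forall u, P u -> (forall f, S f -> ifun_le u f) -> ifun_le u s)].

Definition order_complete (Om : set pt) (P : set (ifun Om)) : Prop :=
  forall S, S `<=` P -> (exists s, is_sup_in P S s) /\ (exists s, is_inf_in P S s).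

Definition dedekind_complete (Om : set pt) (P : set (ifun Om)) : Prop :=
  forall S, S `<=` P -> S !=set0 ->
    ((exists u, P u /\ forall f, S f -> ifun_le f u) -> exists s, is_sup_in P S s) /\
    ((exists l, P l /\ forall f, S f -> ifun_le l f) -> exists s, is_inf_in P S s).

End Defs.
Arguments G {R n} Om.
Arguments G_bd {R n} Om.
Arguments G_ft {R n} Om.
Arguments G_nf {R n} Om.

From mathcomp Require Import all_boot all_order all_algebra all_classical all_reals.
From mathcomp Require Import ereal.
From mathcomp Require Import ring lra.
Import Order.TTheory GRing.Theory Num.Theory.
Set Implicit Arguments. Unset Strict Implicit.
Local Open Scope ring_scope.

(* Write I and S for the lower and upper Baire envelopes on Om (sup over
   d > 0 of the inf, resp. inf of the sup, of a function on the ball B_d(x)).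
   An extended-real function phi satisfies I(D, Om, phi) = phi for every dense
   D iff phi = I(S(phi)), and dually psi = S(I(psi)) for upper endpoints.
   Since I o S and S o I are monotone and idempotent, the supremum of a family
   of D-continuous interval functions is [I(S(sup lo)), S(I(sup hi))] and its
   infimum is [I(S(inf lo)), S(I(inf hi))]. The bounded, finite and nearly
   finite classes are order-convex in G(Om) (two open dense sets meet in an
   open dense set), so bounded families keep their supremum and infimum in the
   class. *)

Section EuclideanDistance.
Variables (R : realType) (n : nat).

Lemma CauchySchwarz_sum (a b : 'I_n -> R) :
  (\sum_(i < n) a i * b i) ^+ 2 <= (\sum_(i < n) a i ^+ 2) * (\sum_(i < n) b i ^+ 2).
Proof.
have lagrange : \sum_(i < n) \sum_(j < n) (a i * b j - a j * b i) ^+ 2 =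
    2 * ((\sum_(i < n) a i ^+ 2) * (\sum_(i < n) b i ^+ 2))
    - 2 * (\sum_(i < n) a i * b i) ^+ 2.
  have expand i j : (a i * b j - a j * b i) ^+ 2 =
      a i ^+ 2 * b j ^+ 2 + b i ^+ 2 * a j ^+ 2 - 2 * (a i * b i * (a j * b j)).
    by ring.
  under eq_bigr do under eq_bigr do rewrite expand.
  under eq_bigr do rewrite !big_split /= sumrN -!mulr_sumr.
  rewrite !big_split /= sumrN -!mulr_suml -mulr_sumr -mulr_suml expr2.
  by rewrite [X in _ + X - _]mulrC; ring.
have : 0 <= \sum_(i < n) \sum_(j < n) (a i * b j - a j * b i) ^+ 2.
  by do 2![apply: sumr_ge0 => ? _]; exact: sqr_ge0.
rewrite lagrange; lra.
Qed.

Lemma edist_triangle (x y z : pt R n) : edist x z <= edist x y + edist y z.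
Proof.
rewrite /edist.
set A := \sum_(i < n) (x i - y i) ^+ 2; set B := \sum_(i < n) (y i - z i) ^+ 2.
set C := \sum_(i < n) (x i - y i) * (y i - z i).
have A0 : 0 <= A by apply: sumr_ge0 => i _; exact: sqr_ge0.
have B0 : 0 <= B by apply: sumr_ge0 => i _; exact: sqr_ge0.
have -> : \sum_(i < n) (x i - z i) ^+ 2 = A + B + 2 * C.
  by rewrite mulr_sumr -!big_split /=; apply: eq_bigr => i _; ring.
have CS : C <= Num.sqrt A * Num.sqrt B.
  rewrite -sqrtrM // (le_trans (ler_norm C)) // -sqrtr_sqr.
  by rewrite ler_sqrt ?mulr_ge0 // CauchySchwarz_sum.
rewrite -[leRHS]ger0_norm ?addr_ge0 ?sqrtr_ge0 // -sqrtr_sqr ler_sqrt ?sqr_ge0 //.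
by rewrite sqrrD !sqr_sqrtr //; lra.
Qed.

Lemma edistxx (x : pt R n) : edist x x = 0.
Proof. by rewrite /edist big1 ?sqrtr0 // => i _; rewrite subrr expr0n. Qed.

End EuclideanDistance.

Section BaireEnvelopes.
Variables (R : realType) (n : nat) (Om : set (pt R n)).
Local Notation T := (dom Om).
Local Notation ed x y := (edist (sval x) (sval y)).
Local Open Scope classical_set_scope.
Local Open Scope ereal_scope.

Lemma edist_lt_shift (x y w : T) (d : R) :
  (ed x y < d)%R -> (ed y w < d - ed x y)%R -> (ed x w < d)%R.
Proof. by move=> xy yw; apply: le_lt_trans (edist_triangle _ (sval y) _) _; lra. Qed.

Lemma approx_in_ball (x y : T) (d e : R) (P : T -> Prop) : (ed x y < d)%R -> (0 < e)%R ->
  (forall e', (0 < e')%R -> exists w, P w /\ (ed y w < e')%R) ->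
  exists w, [/\ (ed y w < e)%R, (ed x w < d)%R & P w].
Proof.
move=> xy e0 /(_ (Num.min e (d - ed x y)%R)) [|w [Pw]]; first by rewrite lt_min e0 /=; lra.
by rewrite lt_min => /andP[yw /(edist_lt_shift xy) xw]; exists w.
Qed.

Lemma exists_fin_between (a b : \bar R) : a < b -> exists c : R, a < c%:E < b.
Proof.
case: a b => [a||] [b||] //=; rewrite ?lte_fin.
- by move=> ab; exists ((a + b) / 2)%R; rewrite !lte_fin; apply/andP; split; lra.
- by move=> _; exists (a + 1)%R; rewrite ltry andbT lte_fin; lra.
- by move=> _; exists (b - 1)%R; rewrite ltNyr lte_fin; lra.
- by move=> _; exists 0%R; rewrite ltNyr ltry.
Qed.

Definition Ienv_in (D : set T) (phi : T -> \bar R) (x : T) : \bar R :=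
  ereal_sup [set ereal_inf [set phi y | y in [set y | D y /\ (ed x y < d)%R]]
            | d in [set d : R | (0 < d)%R]].

Section IenvIn.
Variables (D : set T) (phi : T -> \bar R) (x : T) (c : \bar R).

Lemma Ienv_in_le : (forall d : R, (0 < d)%R ->
  exists w, [/\ D w, (ed x w < d)%R & phi w <= c]) -> Ienv_in D phi x <= c.
Proof.
move=> near_le; apply: ge_ereal_sup => _ [d d0 <-].
have [w [Dw xw wc]] := near_le d d0.
by apply: le_trans wc; apply: ereal_inf_lbound; exists w.
Qed.

Lemma Ienv_in_ge : (exists2 d : R, (0 < d)%R &
  forall w, D w -> (ed x w < d)%R -> c <= phi w) -> c <= Ienv_in D phi x.
Proof.
move=> [d d0 ball_ge]; apply: le_ereal_sup_tmp; eexists; first by exists d.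
by apply: le_ereal_inf_tmp => _ [w [Dw xw] <-]; exact: ball_ge.
Qed.

Lemma Ienv_in_gt : c < Ienv_in D phi x -> exists2 d : R, (0 < d)%R &
  forall w, D w -> (ed x w < d)%R -> c < phi w.
Proof.
move=> /ereal_sup_gt [_ [d d0 <-] c_inf]; exists d => // w Dw xw.
by apply: lt_le_trans c_inf _; apply: ereal_inf_lbound; exists w.
Qed.

Lemma Ienv_in_lt : Ienv_in D phi x < c -> forall d : R, (0 < d)%R ->
  exists w, [/\ D w, (ed x w < d)%R & phi w < c].
Proof.
move=> env_c d d0.
have /ereal_inf_lt [_ [w [Dw xw] <-] wc] : ereal_inf
    [set phi y | y in [set y | D y /\ (ed x y < d)%R]] < c.
  by apply: le_lt_trans env_c; apply: ereal_sup_ubound; exists d.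
by exists w.
Qed.

End IenvIn.

Lemma le_Ienv_in D phi psi : (forall y, phi y <= psi y) ->
  forall x, Ienv_in D phi x <= Ienv_in D psi x.
Proof.
move=> le_phi x; apply: ge_ereal_sup => _ [d d0 <-]; apply: le_ereal_sup_tmp.
eexists; first by exists d.
apply: le_ereal_inf_tmp => _ [w Dw <-]; apply: le_trans (le_phi w).
by apply: ereal_inf_lbound; exists w.
Qed.

Lemma Ienv_in_subset D1 D2 phi : D1 `<=` D2 ->
  forall x, Ienv_in D2 phi x <= Ienv_in D1 phi x.
Proof.
move=> D12 x; apply: ge_ereal_sup => _ [d d0 <-]; apply: le_ereal_sup_tmp.
eexists; first by exists d.
by apply: ereal_inf_le_tmp => _ [w [D1w xw] <-]; exists w => //; split => //; exact: D12.
Qed.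

Definition Ienv : (T -> \bar R) -> T -> \bar R := Ienv_in setT.
Definition Senv (phi : T -> \bar R) (x : T) : \bar R := - Ienv (fun y => - phi y) x.

Lemma Ienv_le phi x : Ienv phi x <= phi x.
Proof. by apply: Ienv_in_le => d d0; exists x; rewrite edistxx. Qed.

Lemma Senv_ge phi x : phi x <= Senv phi x.
Proof. by rewrite /Senv leeNr; exact: Ienv_le. Qed.

Lemma le_Ienv phi psi : (forall y, phi y <= psi y) -> forall x, Ienv phi x <= Ienv psi x.
Proof. exact: le_Ienv_in. Qed.

Lemma le_Senv phi psi : (forall y, phi y <= psi y) -> forall x, Senv phi x <= Senv psi x.
Proof. by move=> le_phi x; rewrite leeN2; apply: le_Ienv => y; rewrite leeN2. Qed.

Lemma eq_Ienv phi psi : phi =1 psi -> Ienv phi =1 Ienv psi.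
Proof. by move=> e x; apply/le_anti; rewrite !le_Ienv // => y; rewrite e. Qed.

Lemma Senv_lt phi y c : Senv phi y < c -> exists2 d : R, (0 < d)%R &
  forall w, (ed y w < d)%R -> phi w < c.
Proof.
rewrite lteNl => /Ienv_in_gt [d d0 near_gt]; exists d => // w yw.
by rewrite -lteN2; exact: near_gt.
Qed.

Lemma Senv_gt phi y c : c < Senv phi y -> forall d : R, (0 < d)%R ->
  exists w, c < phi w /\ (ed y w < d)%R.
Proof.
rewrite lteNr => /Ienv_in_lt near_lt d d0; have [w [_ yw]] := near_lt d d0.
by rewrite lteN2; exists w.
Qed.

Lemma IenvK phi : Ienv (Ienv phi) =1 Ienv phi.
Proof.
move=> x; apply/le_anti; rewrite Ienv_le /= leNgt; apply/negP.
move=> /exists_fin_between [c /andP [IIc cI]].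
have [d d0 near_gt] := Ienv_in_gt cI.
have [y [_ xy yc]] := Ienv_in_lt IIc d0.
have dxy : (0 < d - ed x y)%R by lra.
have [w [_ yw wc]] := Ienv_in_lt yc dxy.
by move: (near_gt w I (edist_lt_shift xy yw)); rewrite ltNge (ltW wc).
Qed.

Lemma SenvK phi : Senv (Senv phi) =1 Senv phi.
Proof.
move=> x; rewrite /Senv; congr (- _); rewrite -[RHS]IenvK.
by apply: eq_Ienv => y; rewrite oppeK.
Qed.

Definition IS (phi : T -> \bar R) : T -> \bar R := Ienv (Senv phi).
Definition SI (phi : T -> \bar R) : T -> \bar R := Senv (Ienv phi).

Definition nlsc (phi : T -> \bar R) : Prop := phi =1 IS phi.
Definition nusc (phi : T -> \bar R) : Prop := phi =1 SI phi.

Lemma le_IS phi psi : (forall y, phi y <= psi y) -> forall x, IS phi x <= IS psi x.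
Proof. by move=> le_phi; apply: le_Ienv; apply: le_Senv. Qed.

Lemma le_SI phi psi : (forall y, phi y <= psi y) -> forall x, SI phi x <= SI psi x.
Proof. by move=> le_phi; apply: le_Senv; apply: le_Ienv. Qed.

Lemma IS_nlsc phi : nlsc (IS phi).
Proof.
move=> x; apply/le_anti/andP; split.
  by rewrite -[leLHS]IenvK; apply: le_Ienv => y; exact: Senv_ge.
apply: le_Ienv => y; rewrite -[leRHS]SenvK; apply: le_Senv => z; exact: Ienv_le.
Qed.

Lemma SI_nusc phi : nusc (SI phi).
Proof.
move=> x; apply/le_anti/andP; split.
  apply: le_Senv => y; rewrite -[leLHS]IenvK; apply: le_Ienv => z; exact: Senv_ge.
by rewrite -[leRHS]SenvK; apply: le_Senv => y; exact: Ienv_le.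
Qed.

Lemma IS_le_SI_of_le_SI phi psi : (forall y, phi y <= SI psi y) ->
  forall x, IS phi x <= SI psi x.
Proof.
move=> le_phi x; apply: le_trans (Ienv_le _ _) _.
by rewrite -[leRHS]SenvK; apply: le_Senv.
Qed.

Lemma IS_le_SI_of_IS_le phi psi : (forall y, IS phi y <= psi y) ->
  forall x, IS phi x <= SI psi x.
Proof.
move=> le_psi x; apply: le_trans (Senv_ge _ _).
by rewrite -[leLHS]IenvK; apply: le_Ienv.
Qed.

Lemma nuscN phi : nusc phi <-> nlsc (fun y => - phi y).
Proof.
have eqSI x : SI phi x = - IS (fun y => - phi y) x.
  rewrite /SI /IS /Senv; congr (- _); apply: eq_Ienv => y /=; congr (- _).
  by apply: eq_Ienv => z; rewrite oppeK.
by split => e x; [rewrite {1}e eqSI | rewrite eqSI -e]; rewrite oppeK.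
Qed.

Lemma Ienv_in_dense_le D phi x : dense_in D -> Ienv_in D phi x <= IS phi x.
Proof.
move=> Ddense; rewrite leNgt; apply/negP => /exists_fin_between [c /andP [ISc cID]].
have [d d0 near_gt] := Ienv_in_gt cID.
have [y [_ xy yc]] := Ienv_in_lt ISc d0.
have [e e0 near_lt] := Senv_lt yc.
have [w [yw xw Dw]] := approx_in_ball xy e0 (Ddense y).
by move: (near_gt w Dw xw); rewrite ltNge (ltW (near_lt w yw)).
Qed.

Lemma exists_dense_Ienv_in_ge phi x c : c < IS phi x ->
  exists D, dense_in D /\ c <= Ienv_in D phi x.
Proof.
move=> /Ienv_in_gt [d d0 near_gt].
(* D stays dense: near a removed point z we have S phi z > c, so phi > c somewhere close to z. *)
pose D := [set w : T | ~ ((ed x w < d)%R /\ phi w < c)].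
exists D; split; last first.
  apply: Ienv_in_ge; exists d => // w Dw xw.
  by rewrite leNgt; apply/negP => wc; apply: Dw.
move=> z e e0; have [Dz|] := pselect (D z); first by exists z; rewrite edistxx.
move=> /contrapT [xz zc].
have [w [zw xw cw]] := approx_in_ball xz e0 (Senv_gt (near_gt z I xz)).
by exists w; split => // -[_ wc]; move: cw; rewrite ltNge (ltW wc).
Qed.

Lemma nlsc_dense_Ienv_inP phi :
  (forall D, dense_in D -> Ienv_in D phi =1 phi) <-> nlsc phi.
Proof.
have denseT : dense_in (@setT T) by move=> x d d0; exists x; rewrite edistxx.
split=> [Dfix x | phi_nlsc D Ddense x].
  apply/le_anti/andP; split.
    by rewrite -{1}(Dfix _ denseT x); apply: le_Ienv => y; exact: Senv_ge.
  rewrite leNgt; apply/negP => /exists_fin_between [c /andP [phic cIS]].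
  have [D [Ddense cID]] := exists_dense_Ienv_in_ge cIS.
  by move: phic; rewrite -(Dfix D Ddense x) ltNge cID.
apply/le_anti; rewrite {1}phi_nlsc Ienv_in_dense_le //=.
have phi_lsc : Ienv phi =1 phi.
  by move=> y; rewrite phi_nlsc -[RHS]IenvK; apply: eq_Ienv.
by rewrite -{1}phi_lsc; apply: Ienv_in_subset.
Qed.

End BaireEnvelopes.

Section IntervalFunctions.
Variables (R : realType) (n : nat) (Om : set (pt R n)).
Local Notation T := (dom Om).
Local Notation ed x y := (edist (sval x) (sval y)).
Local Open Scope classical_set_scope.
Local Open Scope ereal_scope.

Lemma Ilow_Ienv_in D (f : ifun Om) x : Ilow D f x = Ienv_in D (fun y => lo (f y)) x.
Proof.
rewrite /Ilow /Ienv_in; congr ereal_sup; apply: eq_imagel => d _.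
apply/le_anti/andP; split.
  apply: le_ereal_inf_tmp => _ [y [Dy xy] <-]; apply: ereal_inf_lbound.
  by exists y; split => //; rewrite lexx lohi.
apply: le_ereal_inf_tmp => z [y [Dy xy /andP [yz _]]]; apply: le_trans yz.
by apply: ereal_inf_lbound; exists y.
Qed.

Lemma Supp_Ienv_in D (f : ifun Om) x :
  Supp D f x = - Ienv_in D (fun y => - hi (f y)) x.
Proof.
rewrite /Supp /Ienv_in {1}/ereal_inf image_comp; congr (- ereal_sup _).
apply: eq_imagel => d _ /=; rewrite /ereal_inf; congr (- _).
apply/le_anti/andP; split.
  apply: ge_ereal_sup => z [y [Dy xy /andP [_ zy]]]; apply: le_ereal_sup_tmp.
  by exists (hi (f y)) => //; exists (- hi (f y)); [exists y | rewrite oppeK].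
apply: ge_ereal_sup => _ [_ [y [Dy xy] <-] <-]; rewrite oppeK.
by apply: ereal_sup_ubound; exists y; split => //; rewrite lexx lohi.
Qed.

Lemma D_continuousP (f : ifun Om) : D_continuous f <->
  nlsc (fun y => lo (f y)) /\ nusc (fun y => hi (f y)).
Proof.
rewrite nuscN -!nlsc_dense_Ienv_inP; split.
  move=> fD; split=> D Ddense x; have [flo fhi] := fD D Ddense x.
    by rewrite -Ilow_Ienv_in.
  by rewrite -fhi Supp_Ienv_in oppeK.
move=> [flo fhi] D Ddense x.
by rewrite Ilow_Ienv_in Supp_Ienv_in flo // fhi // oppeK.
Qed.

Definition env_ifun (phi psi : T -> \bar R) (h : forall x, IS phi x <= SI psi x)
  : ifun Om := fun x => Ival (h x).

Section EnvIfun.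
Variables (phi psi : T -> \bar R) (h : forall x, IS phi x <= SI psi x).

Lemma env_ifun_G : G Om (env_ifun h).
Proof. by apply/D_continuousP; split => x; [exact: IS_nlsc | exact: SI_nusc]. Qed.

Lemma G_le_env_ifun g : G Om g -> (forall y, lo (g y) <= phi y) ->
  (forall y, hi (g y) <= psi y) -> ifun_le g (env_ifun h).
Proof.
move=> /D_continuousP [glo ghi] le_phi le_psi x.
by split; [rewrite glo; exact: le_IS | rewrite ghi; exact: le_SI].
Qed.

Lemma env_ifun_le_G g : G Om g -> (forall y, phi y <= lo (g y)) ->
  (forall y, psi y <= hi (g y)) -> ifun_le (env_ifun h) g.
Proof.
move=> /D_continuousP [glo ghi] le_phi le_psi x.
by split; [rewrite [leRHS]glo; exact: le_IS | rewrite [leRHS]ghi; exact: le_SI].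
Qed.

End EnvIfun.

Definition sup_at (e : ival R -> \bar R) (S : set (ifun Om)) (x : T)
  : \bar R := ereal_sup [set e (f x) | f in S].
Definition inf_at (e : ival R -> \bar R) (S : set (ifun Om)) (x : T)
  : \bar R := ereal_inf [set e (f x) | f in S].

Section GSupInf.
Variables (S : set (ifun Om)) (SG : S `<=` G Om).

Lemma sup_env_ival x : IS (sup_at (@lo R) S) x <= SI (sup_at (@hi R) S) x.
Proof.
apply: IS_le_SI_of_le_SI => {}x; apply: ge_ereal_sup => _ [f Sf <-].
have [_ fhi] := (D_continuousP f).1 (SG Sf).
apply: le_trans (lohi (f x)) _; rewrite fhi; apply: le_SI => y.
by apply: ereal_sup_ubound; exists f.
Qed.

Lemma inf_env_ival x : IS (inf_at (@lo R) S) x <= SI (inf_at (@hi R) S) x.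
Proof.
apply: IS_le_SI_of_IS_le => {}x; apply: le_ereal_inf_tmp => _ [f Sf <-].
have [flo _] := (D_continuousP f).1 (SG Sf).
apply: le_trans (lohi (f x)); rewrite flo; apply: le_IS => y.
by apply: ereal_inf_lbound; exists f.
Qed.

Lemma G_is_sup : is_sup_in (G Om) S (env_ifun sup_env_ival).
Proof.
split; first exact: env_ifun_G.
  by move=> f Sf; apply: G_le_env_ifun (SG Sf) _ _ => y;
    apply: ereal_sup_ubound; exists f.
by move=> u Gu ub; apply: env_ifun_le_G Gu _ _ => y;
  apply: ge_ereal_sup => _ [f Sf <-]; case: (ub f Sf y).
Qed.

Lemma G_is_inf : is_inf_in (G Om) S (env_ifun inf_env_ival).
Proof.
split; first exact: env_ifun_G.
  by move=> f Sf; apply: env_ifun_le_G (SG Sf) _ _ => y;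
    apply: ereal_inf_lbound; exists f.
by move=> u Gu lb; apply: G_le_env_ifun Gu _ _ => y;
  apply: le_ereal_inf_tmp => _ [f Sf <-]; case: (lb f Sf y).
Qed.

End GSupInf.

Lemma order_complete_G : order_complete (G Om).
Proof. by move=> S SG; split; eexists; [exact: G_is_sup | exact: G_is_inf]. Qed.

Definition G_convex (P : set (ifun Om)) := forall f g s,
  P f -> P g -> G Om s -> ifun_le f s -> ifun_le s g -> P s.

Lemma dedekind_complete_G_convex P : P `<=` G Om -> G_convex P -> dedekind_complete P.
Proof.
move=> PG Pconv S SP [f0 Sf0]; have SG : S `<=` G Om by move=> f /SP /PG.
split=> [[u [Pu ub]] | [l [Pl lb]]].
- have [Gs ubs least] := G_is_sup SG; eexists; split; last 2 first.
  + exact: ubs.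
  + by move=> v /PG; exact: least.
  by apply: (Pconv f0 u) => //; [exact: SP | exact: ubs | exact: least (PG _ Pu) ub].
- have [Gs lbs great] := G_is_inf SG; eexists; split; last 2 first.
  + exact: lbs.
  + by move=> v /PG; exact: great.
  by apply: (Pconv l f0) => //; [exact: SP | exact: great (PG _ Pl) lb | exact: lbs].
Qed.

Lemma G_convex_bd : G_convex (G_bd Om).
Proof.
move=> f g s [_ [Mf fM]] [_ [Mg gM]] Gs fs sg; split => //.
exists (Num.max Mf Mg) => x; split.
- apply: le_trans (fs x).1; apply: le_trans (fM x).1.
  by rewrite lee_fin lerN2 le_max lexx.
- apply: le_trans (sg x).2 _; apply: le_trans (gM x).2 _.
  by rewrite lee_fin le_max lexx orbT.
Qed.

Lemma fin_num_between (a x b : \bar R) : a \is a fin_num -> b \is a fin_num ->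
  a <= x -> x <= b -> x \is a fin_num.
Proof. by case: a b x => [a||] [b||] [x||]. Qed.

Lemma finite_ival_between (a s b : ival R) : finite_ival a -> finite_ival b ->
  ival_le a s -> ival_le s b -> finite_ival s.
Proof.
move=> [alo ahi] [blo bhi] [aslo ashi] [sblo sbhi].
by split; [exact: fin_num_between alo blo aslo sblo | exact: fin_num_between ahi bhi ashi sbhi].
Qed.

Lemma G_convex_ft : G_convex (G_ft Om).
Proof.
move=> f g s [_ ffin] [_ gfin] Gs fs sg; split => // x.
exact: finite_ival_between (ffin x) (gfin x) (fs x) (sg x).
Qed.

Lemma open_in_setI (D1 D2 : set T) : open_in D1 -> open_in D2 -> open_in (D1 `&` D2).
Proof.
move=> D1open D2open x [D1x D2x].
have [r1 [r10 r1D1]] := D1open x D1x; have [r2 [r20 r2D2]] := D2open x D2x.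
exists (Num.min r1 r2); split; first by rewrite lt_min r10 r20.
by move=> y; rewrite lt_min => /andP [xy1 xy2]; split; [exact: r1D1 | exact: r2D2].
Qed.

Lemma dense_in_setI_open (D1 D2 : set T) : open_in D1 -> dense_in D1 -> dense_in D2 ->
  dense_in (D1 `&` D2).
Proof.
move=> D1open D1dense D2dense x d d0.
have [y [D1y xy]] := D1dense x d d0; have [r [r0 rD1]] := D1open y D1y.
have [w [yw xw D2w]] := approx_in_ball xy r0 (D2dense y).
by exists w; split => //; split => //; exact: rD1.
Qed.

Lemma G_convex_nf : G_convex (G_nf Om).
Proof.
move=> f g s [_ [Df [Dfopen Dfdense ffin]]] [_ [Dg [Dgopen Dgdense gfin]]] Gs fs sg.
split => //; exists (Df `&` Dg); split.
- exact: open_in_setI.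
- exact: dense_in_setI_open.
- move=> x [Dfx Dgx].
  exact: finite_ival_between (ffin x Dfx) (gfin x Dgx) (fs x) (sg x).
Qed.

End IntervalFunctions.

Theorem theorem15 (R : realType) (n : nat) (Om : set (pt R n)) :
  is_open_set Om ->
  order_complete (G Om) /\
  [/\ dedekind_complete (G_bd Om), dedekind_complete (G_ft Om) &
      dedekind_complete (G_nf Om)].
Proof.
move=> _; split; first exact: order_complete_G.
split; apply: dedekind_complete_G_convex.
- by move=> f [].
- exact: G_convex_bd.
- by move=> f [].
- exact: G_convex_ft.
- by move=> f [].
- exact: G_convex_nf.
Qed.
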